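(* Let $1\le\ell\le k-1$ be integers with $k-\ell$ not dividing $k$, and let $R$ be an $\ell$-connected $k$-graph. Then there is a $k$-uniform $\ell$-cycle $C$ with at most $k^4$ edges which is $k$-partite and such that the lattice $\mathcal{L}_C(R)$ is complete.
   Context: A $k$-graph has edges that are $k$-subsets of its vertex set. A ($k$-uniform) $\ell$-cycle is a $k$-graph whose vertices can be cyclically ordered so that every edge consists of $k$ cyclically consecutive vertices and consecutive edges intersect in exactly $\ell$ vertices. A $k$-graph is $k$-partite if its vertex set can be partitioned into $k$ parts so that every edge has exactly one vertex in each part. The $\ell$-line graph of $R$ has vertex set $E(R)$ with $e\sim f$ iff $|e\cap f|\ge\ell$; $R$ is $\ell$-connected if it has no isolated vertices and its edges induce a connected subgraph of the $\ell$-line graph. A homomorphism from $F$ to $R$ is a map $\phi\colon V(F)\to V(R)$ sending edges to edges; its indicator vector $\mathbf{1}_\phi\in\mathbb{N}^{V(R)}$ is $\mathbf{1}_\phi(v)=|\phi^{-1}(v)|$. The $F$-lattice $\mathcal{L}_F(R)\subseteq\mathbb{Z}^{V(R)}$ is the additive subgroup generated by all $\mathbf{1}_\phi$ with $\phi$ a homomorphism from $F$ to $R$; it is complete if it contains every $\mathbf{b}\in\mathbb{Z}^{V(R)}$ with $\sum_{v}\mathbf{b}(v)$ divisible by $|V(F)|$. *)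

From mathcomp Require Import all_boot all_algebra.
Set Implicit Arguments. Unset Strict Implicit. Unset Printing Implicit Defensive.
Import GRing.Theory Num.Theory.

Definition kgraph (k : nat) (V : finType) (E : {set {set V}}) : Prop :=
  forall e, e \in E -> #|e| = k.

Definition no_isolated (V : finType) (E : {set {set V}}) : Prop :=
  forall v : V, exists2 e, e \in E & v \in e.

Definition line_adj (V : finType) (l : nat) (E : {set {set V}}) : rel {set V} :=
  fun e f => [&& e \in E, f \in E & l <= #|e :&: f|].

Definition l_connected (V : finType) (l : nat) (E : {set {set V}}) : Prop :=
  no_isolated E /\
  forall e f, e \in E -> f \in E -> connect (line_adj l E) e f.

(* The k-uniform l-cycle with m edges: vertices 0..n-1 (n = m(k-l)) in cyclic
   order, edge i = the k cyclically consecutive vertices starting at i(k-l). *)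
Definition cyc_edge (k l m i : nat) : {set 'I_(m * (k - l))} :=
  [set x : 'I_(m * (k - l)) |
     [exists t : 'I_k, val x == (i * (k - l) + t) %% (m * (k - l))]].

Definition cyc_edges (k l m : nat) : {set {set 'I_(m * (k - l))}} :=
  [set cyc_edge k l m (val i) | i : 'I_m].

Definition is_lcycle (k l m : nat) : Prop :=
  forall i, i < m ->
    #|cyc_edge k l m i| = k /\
    #|cyc_edge k l m i :&: cyc_edge k l m (i.+1 %% m)| = l.

Definition kpartite (k : nat) (V : finType) (E : {set {set V}}) : Prop :=
  exists f : V -> 'I_k,
    forall e, e \in E -> forall p : 'I_k, #|[set v in e | f v == p]| = 1.

Definition is_hom (VC VR : finType) (EC : {set {set VC}}) (ER : {set {set VR}})
  (phi : {ffun VC -> VR}) : bool :=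
  [forall e in EC, (phi @: e) \in ER].

Definition ind (VC VR : finType) (phi : {ffun VC -> VR}) (v : VR) : nat :=
  #|[set x | phi x == v]|.

(* the F-lattice L_F(R) is complete: every integer vector whose coordinate sum
   is divisible by |V(F)| is an integer combination of indicator vectors of
   homomorphisms F -> R (there are finitely many such homomorphisms, so the
   generated subgroup is exactly the set of such combinations). *)
Definition lattice_complete (VC VR : finType) (EC : {set {set VC}})
  (ER : {set {set VR}}) : Prop :=
  forall b : {ffun VR -> int},
    (#|VC|%:Z %| (\sum_(v : VR) b v)%R)%Z ->
    exists c : {ffun {ffun VC -> VR} -> int},
      forall v : VR,
        b v = (\sum_(phi : {ffun VC -> VR} | is_hom EC ER phi)
                 c phi * (ind phi v)%:Z)%R.

From mathcomp Require Import all_boot all_algebra.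
From mathcomp Require Import fingroup perm zify.
Set Implicit Arguments. Unset Strict Implicit. Unset Printing Implicit Defensive.
Import GRing.Theory.

(* Write d = k - l and k = q d + r; then 0 < r < d since d does not divide k.
   Cut the cycle into blocks of d consecutive vertices.  Every edge consists of
   q whole blocks followed by the first r vertices of the next block, so the
   vertices at position i of their block meet an edge in q + [i < r] consecutive
   blocks.  Colouring position i of block b by
   i q + min(i, r) + (b mod (q + [i < r])) therefore makes every edge rainbow, and
   on a cycle of q (q + 1) blocks colour 0 is used q times while colour r (q + 1)
   is used q + 1 times.  For q = 1 that cycle is too short; on four blocks three
   of the colours are permuted instead.

   A rainbow k-colouring of C followed by a permutation tau of the colours and a
   bijection h from the colours onto an edge of R is a homomorphism C -> R whose
   indicator vector at h c is the size of the colour class of tau c.  If the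
   classes of a and b have sizes s and s + 1, the homomorphisms for the 3-cycle
   (a c b) and for the transposition (a c) differ by 1_(h c) - 1_(h b).  So the
   lattice contains 1_u - 1_v whenever u and v share an edge, hence, R being
   l-connected with l >= 1, for all u and v; together with one indicator vector,
   of coordinate sum |V(C)|, these generate every vector whose coordinate sum is
   divisible by |V(C)|. *)

Lemma card_ord_pred n (P : pred nat) (s : seq nat) :
  uniq s -> all (fun x => x < n) s -> (forall x, x < n -> P x = (x \in s)) ->
  #|[set x : 'I_n | P x]| = size s.
Proof.
move=> s_uniq; rewrite all_count => /eqP <- Ps.
pose s' : seq 'I_n := pmap insub s.
rewrite -(size_pmap_sub 'I_n) -/s' -(card_uniqP (pmap_sub_uniq _ s_uniq)).
by apply: eq_card => x; rewrite inE mem_pmap_sub Ps.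
Qed.

Lemma exists_addn_modn j s p : 0 < p -> exists2 t, t < p & (j + t) %% p = s %% p.
Proof.
move=> p_gt0; exists ((s + (p - j %% p)) %% p); first exact: ltn_pmod.
by rewrite -modnDml modnDmr addnCA subnKC ?modnDr // ltnW // ltn_pmod.
Qed.

Lemma card_ord_mod n a D e : n = a * D -> e < D ->
  #|[set x : 'I_n | x %% D == e]| = a.
Proof.
move=> nE e_lt_D; have D_gt0 : 0 < D by apply: leq_ltn_trans e_lt_D.
pose s := [seq t * D + e | t <- iota 0 a].
rewrite (@card_ord_pred _ (fun x => x %% D == e) s) ?size_map ?size_iota //.
- rewrite map_inj_uniq ?iota_uniq // => t1 t2 /eqP.
  by rewrite eqn_add2r eqn_pmul2r // => /eqP.
- apply/allP => y /mapP[t]; rewrite mem_iota nE => /= t_lt_a ->.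
  apply: leq_trans (_ : t.+1 * D <= a * D); last by rewrite leq_mul2r t_lt_a orbT.
  by rewrite mulSn addnC ltn_add2r.
move=> x x_lt_n; apply/eqP/mapP => [xE|[t _ ->]].
  exists (x %/ D); last by rewrite {1}(divn_eq x D) xE.
  by rewrite mem_iota /= ltn_divLR // -nE.
by rewrite modnMDl modn_small.
Qed.

Lemma modnM_split x p d : x %% (p * d) = x %/ d %% p * d + x %% d.
Proof. by rewrite modn_divl -(modn_dvdm x (dvdn_mull p (dvdnn d))) -divn_eq. Qed.

Lemma eqn_block d b c i j : i < d -> j < d ->
  (b * d + i == c * d + j) = (b == c) && (i == j).
Proof.
move=> i_lt_d j_lt_d; apply/eqP/andP => [bcE|[/eqP-> /eqP->] //].
have d_gt0 : 0 < d by apply: leq_ltn_trans i_lt_d.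
have := congr1 (divn^~ d) bcE; have := congr1 (modn^~ d) bcE => /=.
by rewrite !modnMDl !modn_small // !divnMDl // !divn_small // !addn0 => -> ->.
Qed.

Section CycleEdges.

Variables k l m : nat.
Local Notation d := (k - l).
Local Notation n := (m * (k - l)).

Lemma card_cyc_edge i : 0 < k <= n -> #|cyc_edge k l m i| = k.
Proof.
case/andP=> k_gt0 k_le_n; have n_gt0 : 0 < n by apply: leq_trans k_le_n.
pose v (t : 'I_k) : 'I_n := Ordinal (ltn_pmod (i * d + t) n_gt0).
have -> : cyc_edge k l m i = [set v t | t : 'I_k].
  apply/setP => x; rewrite inE; apply/existsP/imsetP => [[t /eqP xE]|[t _ ->]].
    by exists t => //; apply: val_inj.
  by exists t.
rewrite card_imset ?card_ord // => t t' /(congr1 val) /= /eqP.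
rewrite eqn_modDl !modn_small; first by move/eqP/val_inj.
- exact: leq_trans (ltn_ord t') k_le_n.
- exact: leq_trans (ltn_ord t) k_le_n.
Qed.

Lemma card_cyc_edge_next i : l < k -> k + d <= n -> i < m ->
  #|cyc_edge k l m i :&: cyc_edge k l m (i.+1 %% m)| = l.
Proof.
move=> l_lt_k kd_le_n i_lt_m; have n_gt0 : 0 < n by lia.
pose v (t : 'I_l) : 'I_n := Ordinal (ltn_pmod (i * d + d + t) n_gt0).
have nextE t : ((i.+1 %% m) * d + t) %% n = (i * d + d + t) %% n.
  by rewrite muln_modl modnDml mulSnr.
have -> : cyc_edge k l m i :&: cyc_edge k l m (i.+1 %% m) = [set v t | t : 'I_l].
  apply/setP => x; rewrite !inE; apply/andP/imsetP => [[]|[t _ ->]].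
    move=> /existsP[t1 /eqP x1] /existsP[t2 /eqP x2].
    rewrite nextE x1 -addnA in x2; move/eqP: x2.
    have := ltn_ord t1; have := ltn_ord t2 => t2_lt_k t1_lt_k.
    rewrite eqn_modDl !modn_small; [move=> /eqP t1E|lia|lia].
    have t2_lt_l : t2 < l by have := ltn_ord t1; lia.
    by exists (Ordinal t2_lt_l) => //; apply: val_inj; rewrite /= x1 t1E addnA.
  split; apply/existsP.
    have t_lt_k : d + t < k by have := ltn_ord t; lia.
    by exists (Ordinal t_lt_k); rewrite /= addnA.
  have t_lt_k : t < k by have := ltn_ord t; lia.
  by exists (Ordinal t_lt_k); rewrite /= nextE.
rewrite card_imset ?card_ord // => t t' /(congr1 val) /= /eqP.
have := ltn_ord t; have := ltn_ord t' => t'_lt_l t_lt_l.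
rewrite eqn_modDl !modn_small; [by move/eqP/val_inj|lia|lia].
Qed.

Lemma cyc_is_lcycle : l < k -> k + d <= n -> is_lcycle k l m.
Proof.
move=> l_lt_k kd_le_n i i_lt_m; split; last exact: card_cyc_edge_next.
by apply: card_cyc_edge; apply/andP; split; lia.
Qed.

Lemma cyc_edges_kgraph : 0 < k <= n -> kgraph k (cyc_edges k l m).
Proof. by move=> kn e /imsetP[i _ ->]; apply: card_cyc_edge. Qed.

End CycleEdges.

Section HomLattice.

Variables (VC VR : finType) (EC : {set {set VC}}) (ER : {set {set VR}}).
Local Open Scope ring_scope.

Definition in_lattice (w : VR -> int) : Prop :=
  exists c : {ffun {ffun VC -> VR} -> int},
    forall v, w v = \sum_(phi | is_hom EC ER phi) c phi * (ind phi v)%:Z.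

Lemma in_lattice_ext (w w' : VR -> int) :
  w =1 w' -> in_lattice w -> in_lattice w'.
Proof. by move=> ww' [c wE]; exists c => v; rewrite -ww'. Qed.

Lemma in_lattice0 : in_lattice (fun _ => 0).
Proof. by exists [ffun=> 0] => v; rewrite big1 // => phi _; rewrite ffunE mul0r. Qed.

Lemma in_latticeD (w1 w2 : VR -> int) :
  in_lattice w1 -> in_lattice w2 -> in_lattice (fun v => w1 v + w2 v).
Proof.
move=> [c1 w1E] [c2 w2E]; exists [ffun phi => c1 phi + c2 phi] => v.
by rewrite w1E w2E -big_split; apply: eq_bigr => phi _; rewrite ffunE mulrDl.
Qed.

Lemma in_latticeZ (z : int) (w : VR -> int) :
  in_lattice w -> in_lattice (fun v => z * w v).
Proof.
move=> [c wE]; exists [ffun phi => z * c phi] => v.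
by rewrite wE mulr_sumr; apply: eq_bigr => phi _; rewrite ffunE mulrA.
Qed.

Lemma in_latticeB (w1 w2 : VR -> int) :
  in_lattice w1 -> in_lattice w2 -> in_lattice (fun v => w1 v - w2 v).
Proof.
move=> l1 l2; apply: in_lattice_ext (in_latticeD l1 (in_latticeZ (-1) l2)) => v.
by rewrite mulN1r.
Qed.

Lemma in_lattice_sum (I : Type) (s : seq I) (f : I -> VR -> int) :
  (forall i, in_lattice (f i)) -> in_lattice (fun v => \sum_(i <- s) f i v).
Proof.
move=> lf; elim: s => [|i s IHs].
  by apply: in_lattice_ext in_lattice0 => v; rewrite big_nil.
by apply: in_lattice_ext (in_latticeD (lf i) IHs) => v; rewrite big_cons.
Qed.

Lemma in_lattice_ind (phi : {ffun VC -> VR}) :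
  is_hom EC ER phi -> in_lattice (fun v => (ind phi v)%:Z).
Proof.
move=> hom_phi; exists [ffun psi => (psi == phi)%:Z] => v.
rewrite (bigD1 phi) //= ffunE eqxx mul1r big1 ?addr0 // => psi /andP[_ /negbTE].
by rewrite ffunE => ->; rewrite mul0r.
Qed.

Lemma sum_ind (phi : {ffun VC -> VR}) : \sum_v (ind phi v)%:Z = #|VC|%:Z.
Proof.
rewrite -(big_morph _ PoszD (erefl 0%:Z)) -sum1_card (partition_big phi predT) //=.
congr _%:Z.
by apply: eq_bigr => v _; rewrite /ind -sum1_card; apply: eq_bigl => x; rewrite inE.
Qed.

Lemma lattice_complete_of_diffs :
  (forall v0 : VR, exists phi0, is_hom EC ER phi0) ->
  (forall u v : VR, in_lattice (fun w => (w == u)%:Z - (w == v)%:Z)) ->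
  lattice_complete EC ER.
Proof.
move=> hom_ex diffs b dvd_sum.
have [v0 _ | VR0] := pickP (@predT VR); last first.
  by exists 0 => v; move: (VR0 v).
have [phi0 hom_phi0] := hom_ex v0.
pose s := ((\sum_v b v) %/ #|VC|%:Z)%Z.
pose w u := b u - s * (ind phi0 u)%:Z.
have sum_w : \sum_u w u = 0.
  by rewrite sumrB -mulr_sumr sum_ind divzK // subrr.
have bE v : b v = s * (ind phi0 v)%:Z + \sum_u w u * ((v == u)%:Z - (v == v0)%:Z).
  under eq_bigr do rewrite mulrBr.
  rewrite sumrB -mulr_suml sum_w mul0r subr0 (bigD1 v) //= eqxx mulr1.
  rewrite big1 => [|u /negbTE]; last by rewrite eq_sym => ->; rewrite mulr0.
  by rewrite addr0 /w addrC subrK.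
have diffs_v0 u := in_latticeZ (w u) (diffs u v0).
apply: in_lattice_ext (in_latticeD (in_latticeZ s (in_lattice_ind hom_phi0))
                                   (in_lattice_sum _ diffs_v0)).
by move=> v; rewrite bE.
Qed.

End HomLattice.

Definition rainbow (V : finType) (E : {set {set V}}) k (phi : V -> 'I_k) : Prop :=
  forall e, e \in E -> phi @: e = [set: 'I_k].

Definition colour_class (V : finType) k (phi : V -> 'I_k) (c : 'I_k) : nat :=
  #|[set x | phi x == c]|.

Lemma rainbow_kpartite (V : finType) (E : {set {set V}}) k (phi : V -> 'I_k) :
  kgraph k E -> rainbow E phi -> kpartite k E.
Proof.
move=> kE rb; exists phi => e e_in p.
have phi_inj : {in e &, injective phi}.
  by apply/imset_injP; rewrite rb // cardsT card_ord kE.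
have /imsetP[x x_in pE] : p \in phi @: e by rewrite rb ?in_setT.
rewrite (_ : [set v in e | phi v == p] = [set x]) ?cards1 //.
apply/setP => y; rewrite !inE pE; apply/andP/eqP => [[y_in /eqP]|->].
  exact: phi_inj.
by rewrite x_in.
Qed.

Section Relabel.

Variables (VC VR : finType) (EC : {set {set VC}}) (ER : {set {set VR}}) (k : nat).
Variables (phi : VC -> 'I_k) (h : 'I_k -> VR).
Hypotheses (phi_rainbow : rainbow EC phi) (h_inj : injective h).

Definition relabel (tau : {perm 'I_k}) : {ffun VC -> VR} :=
  [ffun x => h (tau^-1 (phi x))]%g.

Lemma relabel_hom tau : h @: [set: 'I_k] \in ER -> is_hom EC ER (relabel tau).
Proof.
move=> he; apply/forall_inP => f f_in.
suff -> : relabel tau @: f = h @: [set: 'I_k] by [].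
apply/setP => v; apply/imsetP/imsetP => [[x _ ->]|[c _ ->]].
  by exists (tau^-1 (phi x))%g; rewrite ?ffunE.
have /imsetP[x x_in xE] : tau c \in phi @: f by rewrite phi_rainbow ?in_setT.
by exists x; rewrite // ffunE -xE permK.
Qed.

Lemma ind_relabel tau c : ind (relabel tau) (h c) = colour_class phi (tau c).
Proof.
apply: eq_card => x; rewrite !inE ffunE (inj_eq h_inj).
by rewrite (can2_eq (permKV tau) (permK tau)).
Qed.

Lemma ind_relabel_out tau v : v \notin h @: [set: 'I_k] -> ind (relabel tau) v = 0.
Proof.
move=> v_out; apply/eqP; rewrite cards_eq0; apply/eqP/setP => x.
by rewrite !inE ffunE; apply/negbTE; apply: contraNneq v_out => <-; rewrite imset_f.
Qed.

End Relabel.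

Section RainbowLattice.

Variables (VC VR : finType) (EC : {set {set VC}}) (ER : {set {set VR}}) (k : nat).
Variables (phi : VC -> 'I_k) (a b : 'I_k).
Hypotheses (phi_rainbow : rainbow EC phi) (ER_kgraph : kgraph k ER).
Hypothesis class_ab : colour_class phi b = (colour_class phi a).+1.
Local Open Scope ring_scope.

Lemma edge_enum e : e \in ER -> exists2 h : 'I_k -> VR, injective h & h @: [set: 'I_k] = e.
Proof.
move=> e_in; have ek := ER_kgraph e_in.
exists (fun c => enum_val (cast_ord (esym ek) c)).
  by move=> c1 c2 /enum_val_inj /cast_ord_inj.
apply/setP => v; apply/imsetP/idP => [[c _ ->]|v_in]; first exact: enum_valP.
by exists (cast_ord ek (enum_rank_in v_in v)); rewrite ?cast_ordK ?enum_rankK_in.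
Qed.

Lemma colour_class_3cycle c y : c != b ->
  (colour_class phi ((tperm a c * tperm a b)%g y))%:Z
    - (colour_class phi (tperm a c y))%:Z = (y == c)%:Z - (y == b)%:Z.
Proof.
have ab : a != b by apply/eqP => abE; move: class_ab; rewrite abE; lia.
move=> cb; rewrite permM.
case: (tpermP a c y) => [->|->|ya yc].
- case: (eqVneq a c) => [<-|ac].
    by rewrite !tpermL class_ab (negbTE ab) -addn1 PoszD addrAC subrr add0r.
  by rewrite tpermD ?(eq_sym b) // subrr (negbTE ab).
- by rewrite tpermL class_ab eqxx (negbTE cb) -addn1 PoszD addrAC subrr add0r.
- rewrite (introF eqP yc); case: (tpermP a b y) => [/ya []|->|_ yb].
    by rewrite class_ab eqxx -addn1 PoszD opprD addrA subrr.
  by rewrite subrr (introF eqP yb).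
Qed.

Lemma in_lattice_edge_diff e u v : e \in ER -> u \in e -> v \in e ->
  in_lattice EC ER (fun w => (w == u)%:Z - (w == v)%:Z).
Proof.
move=> e_in; have [h h_inj hE] := edge_enum e_in.
have hom tau : is_hom EC ER (relabel phi h tau) by apply: relabel_hom; rewrite // hE.
suff diff_b c : in_lattice EC ER (fun w => (w == h c)%:Z - (w == h b)%:Z).
  rewrite -hE => /imsetP[cu _ ->] /imsetP[cv _ ->].
  apply: in_lattice_ext (in_latticeB (diff_b cu) (diff_b cv)) => w.
  by rewrite opprB addrA subrK.
have [->|cb] := eqVneq c b.
  by apply: in_lattice_ext (in_lattice0 EC ER) => w; rewrite subrr.
apply: in_lattice_ext (in_latticeB (in_lattice_ind (hom (tperm a c * tperm a b)%g))
                                   (in_lattice_ind (hom (tperm a c)))) => w.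
have [/imsetP[y _ ->]|w_out] := boolP (w \in h @: [set: 'I_k]).
  by rewrite !ind_relabel // !(inj_eq h_inj) colour_class_3cycle.
have w_neq y : (w == h y) = false by apply: contraNF w_out => /eqP ->; rewrite imset_f.
by rewrite !ind_relabel_out // !w_neq subrr.
Qed.

Lemma rainbow_lattice_complete (l : nat) :
  (0 < l)%N -> l_connected l ER -> lattice_complete EC ER.
Proof.
move=> l_gt0 [no_iso conn]; apply: lattice_complete_of_diffs => [v0|u v].
  have [e e_in _] := no_iso v0; have [h h_inj hE] := edge_enum e_in.
  by exists (relabel phi h 1%g); apply: relabel_hom; rewrite // hE.
have [e1 e1_in u_in] := no_iso u; have [e2 e2_in v_in] := no_iso v.
case/connectP: (conn e1 e2 e1_in e2_in) => p + e2E; rewrite {e2 e2_in}e2E in v_in.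
elim: p u e1 e1_in u_in v_in => [|f p IHp] u e1 e1_in u_in /= v_in.
  by move=> _; apply: in_lattice_edge_diff v_in.
case/andP=> /and3P[_ f_in meet] path_p.
have /set0Pn[w] : e1 :&: f != set0 by rewrite -card_gt0; apply: leq_trans meet.
rewrite inE => /andP[w_e1 w_f].
apply: in_lattice_ext (in_latticeD (in_lattice_edge_diff e1_in u_in w_e1)
                                   (IHp w f f_in w_f v_in path_p)) => x.
by rewrite addrA subrK.
Qed.

End RainbowLattice.

(* Position i of a block takes its colours in [slot_start i, slot_start i + slot_size i). *)
Definition slot_start q r i := i * q + minn i r.

Definition slot_size q r i := q + (i < r).

(* For q = 1, positions 0 and r carry the colours 0, 1, 2r with class sizes 2, 2, 4
   on four blocks; the tables permute them to sizes 2, 3, 3 while every window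
   (b, 0), (b + 1, 0), (b, r) still gets all three. *)
Definition block_colour q r b i :=
  if (q == 1) && ((i == 0) || (i == r)) then
    nth 0 (if i == 0 then [:: 0; 1; 0; r.*2] else [:: r.*2; r.*2; 1; 1]) (b %% 4)
  else slot_start q r i + b %% slot_size q r i.

Definition block_colouring d q r x := block_colour q r (x %/ d) (x %% d).

Definition num_blocks q := if q == 1 then 4 else q * q.+1.

Section BlockColouring.

Variables d q r : nat.
Hypotheses (r_gt0 : 0 < r) (r_lt_d : r < d) (q_gt0 : 0 < q).
Local Notation k := (q * d + r).
Local Notation colour := (block_colouring d q r).

Let d_gt0 : 0 < d. Proof. exact: ltn_trans r_lt_d. Qed.

Lemma slot_size_gt0 i : 0 < slot_size q r i.
Proof. by rewrite /slot_size addn_gt0 q_gt0. Qed.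

Lemma block_colouringE b i : i < d -> colour (b * d + i) = block_colour q r b i.
Proof.
by move=> i_lt_d; rewrite /block_colouring divnMDl // divn_small // addn0 modnMDl modn_small.
Qed.

Lemma block_colouring_mod x : colour (x %% (num_blocks q * d)) = colour x.
Proof.
rewrite /block_colouring -modn_divl modn_dvdm ?dvdn_mull //.
rewrite /block_colour; case: ifP => [/andP[/eqP q1 _]|_].
  by rewrite /num_blocks q1 modn_mod.
rewrite modn_dvdm // /slot_size /num_blocks.
case: (q =P 1) => [->|_]; first by case: (_ < r).
by case: (_ < r); rewrite ?addn0 ?addn1; [apply: dvdn_mull | apply: dvdn_mulr].
Qed.

Lemma block_colouring_lt x : colour x < k.
Proof.
rewrite /block_colouring /block_colour; have := ltn_pmod x d_gt0.
move: (x %/ d) (x %% d) => b i i_lt_d.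
case: ifP => [/andP[/eqP q1 _]|_].
  have := ltn_pmod b (isT : 0 < 4); rewrite q1.
  by case: (b %% 4) => [|[|[|[|]]]] //; case: (i == 0) => /=; lia.
have := ltn_pmod b (slot_size_gt0 i); rewrite /slot_start /slot_size.
case: ltnP => ir; nia.
Qed.

Lemma slot_decomp c : c < k ->
  exists i s, [/\ i < d, s < slot_size q r i & c = slot_start q r i + s].
Proof.
rewrite /slot_size /slot_start => c_lt_k.
have [c_small|c_big] := ltnP c (r * q.+1).
  exists (c %/ q.+1), (c %% q.+1).
  have i_lt_r : c %/ q.+1 < r by rewrite ltn_divLR.
  rewrite i_lt_r addn1 ltn_pmod // (minn_idPl (ltnW i_lt_r)); split => //; first lia.
  by rewrite -mulnSr -divn_eq.
exists (r + (c - r * q.+1) %/ q), ((c - r * q.+1) %% q).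
have -> : (r + (c - r * q.+1) %/ q < r) = false by rewrite ltnNge leq_addr.
rewrite addn0 ltn_pmod // minnC (minn_idPl (leq_addr _ _)); split => //.
  have : (c - r * q.+1) %/ q < d - r by rewrite ltn_divLR //; nia.
  lia.
have := divn_eq (c - r * q.+1) q; lia.
Qed.

Lemma block_colouring_window_q1 j c : q = 1 -> c \in [:: 0; 1; r.*2] ->
  exists2 t, t \in [:: 0; r; d] & colour (j * d + t) = c.
Proof.
move=> q1; have r_neq0 : (r == 0) = false by rewrite eqn0Ngt r_gt0.
have E0 : colour (j * d + 0) = nth 0 [:: 0; 1; 0; r.*2] (j %% 4).
  by rewrite block_colouringE // /block_colour q1.
have Er : colour (j * d + r) = nth 0 [:: r.*2; r.*2; 1; 1] (j %% 4).
  by rewrite block_colouringE // /block_colour q1 r_neq0 /= eqxx.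
have Ed : colour (j * d + d) = nth 0 [:: 0; 1; 0; r.*2] ((j %% 4).+1 %% 4).
  rewrite -mulSnr -[_ * d]addn0 block_colouringE // /block_colour q1 /=.
  by rewrite -[j.+1]addn1 -modnDml addn1.
have := ltn_pmod j (isT : 0 < 4).
case: (j %% 4) E0 Er Ed => [|[|[|[|]]]] //= E0 Er Ed _; rewrite !inE => /or3P[] /eqP->.
all: first [ by exists 0; rewrite ?inE ?eqxx ?E0
           | by exists r; rewrite ?inE ?eqxx ?orbT ?Er
           | by exists d; rewrite ?inE ?eqxx ?orbT ?Ed ].
Qed.

Lemma block_colouring_window j c : c < k -> exists2 t, t < k & colour (j * d + t) = c.
Proof.
move=> c_lt_k; have [i [s [i_lt_d s_lt cE]]] := slot_decomp c_lt_k.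
case special: ((q == 1) && ((i == 0) || (i == r))).
  case/andP: special => /eqP q1 i0r.
  have c_in : c \in [:: 0; 1; r.*2].
    move: s_lt; rewrite cE /slot_start /slot_size q1 !inE.
    by case/orP: i0r => /eqP-> /=; rewrite ?r_gt0 ?ltnn ?minnn ?addn0 ?addn1; lia.
  have [t t_in tE] := block_colouring_window_q1 j q1 c_in.
  by exists t => //; move: t_in; rewrite q1 !inE; lia.
have [t t_lt tE] := exists_addn_modn j s (slot_size_gt0 i).
exists (t * d + i).
  by move: t_lt; rewrite /slot_size; case: ltnP => ir; nia.
by rewrite addnA -mulnDl block_colouringE // /block_colour special tE modn_small.
Qed.

Lemma block_colouring_eq0 x : (colour x == 0) = (x %% (q.+1 * d) == 0).
Proof.
rewrite modnM_split addn_eq0 muln_eq0 (eqn0Ngt d) d_gt0 orbF /block_colouring.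
move: (x %/ d) (x %% d) => b i; rewrite /block_colour /slot_start /slot_size.
have := ltn_pmod b (isT : 0 < 4).
case: (eqVneq i 0) => [->|i_neq0] /=.
  rewrite r_gt0 addn1 mul0n min0n add0n; case: (q =P 1) => [q1|_] /=; rewrite andbT //.
  rewrite q1 -(modn_dvdm b (isT : 2 %| 4)).
  by case: (b %% 4) => [|[|[|[|]]]] //=; lia.
rewrite andbF; case: ifP => _.
  by case: (b %% 4) => [|[|[|[|]]]] //=; case: (i == r); lia.
by move=> _; apply/negbTE; lia.
Qed.

Lemma block_colouring_eq_slot_r x : q != 1 ->
  (colour x == slot_start q r r) = (x %% (q * d) == r).
Proof.
move=> q_neq1; rewrite modnM_split.
have := eqn_block (x %/ d %% q) 0 (ltn_pmod x d_gt0) r_lt_d; rewrite mul0n add0n => ->.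
rewrite /block_colouring; move: (x %/ d) (x %% d) => b i.
rewrite /block_colour (negbTE q_neq1) /= /slot_start.
have := ltn_pmod b (slot_size_gt0 i); rewrite /slot_size.
case: (ltngtP i r) => [i_lt_r|r_lt_i|->] /=; rewrite minnn ?addn0 ?addn1 => s_lt.
- by rewrite andbF; apply/negbTE; nia.
- by rewrite andbF; apply/negbTE; nia.
- by rewrite andbT -{2}(addn0 (r * q + r)) eqn_add2l.
Qed.

Lemma block_colouring_eq1 x : q = 1 -> x < 4 * d ->
  (colour x == 1) = (x \in [:: 1 * d + 0; 2 * d + r; 3 * d + r]).
Proof.
move=> q1 x_lt; rewrite {2}(divn_eq x d) !inE !eqn_block ?ltn_pmod //.
have : x %/ d < 4 by rewrite ltn_divLR.
rewrite /block_colouring; move: (x %/ d) (x %% d) => b i b_lt4.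
rewrite /block_colour /slot_start /slot_size q1 /= modn_small //.
case: (eqVneq i 0) => [->|i_neq0] /=.
  rewrite (ltn_eqF r_gt0) !andbF andbT.
  by case: b b_lt4 => [|[|[|[|]]]] //= _; rewrite -muln2; lia.
case: (eqVneq i r) => [<-|i_neq_r] /=.
  by rewrite !andbT; case: b b_lt4 => [|[|[|[|]]]] //= _; rewrite -?muln2; lia.
by rewrite !andbF; apply/negbTE; lia.
Qed.

Lemma block_colouring_classes : exists a b, [/\ a < k, b < k &
  #|[set x : 'I_(num_blocks q * d) | colour x == b]|
    = #|[set x : 'I_(num_blocks q * d) | colour x == a]|.+1].
Proof.
have class0 a : num_blocks q * d = a * (q.+1 * d) ->
    #|[set x : 'I_(num_blocks q * d) | colour x == 0]| = a.
  move=> nE; rewrite -(card_ord_mod nE (_ : 0 < q.+1 * d)) ?muln_gt0 //.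
  by apply: eq_card => x; rewrite !inE block_colouring_eq0.
have [q1|q_neq1] := eqVneq q 1.
  exists 0, 1; split; [lia|lia|].
  rewrite (class0 2); last by rewrite /num_blocks q1 mulnA.
  rewrite (@card_ord_pred _ (fun x => colour x == 1) [:: 1 * d + 0; 2 * d + r; 3 * d + r]) //=.
  - by rewrite !inE !eqn_block.
  - by rewrite /num_blocks q1 /= !andbT; lia.
  - by move=> x x_lt; rewrite block_colouring_eq1 // -[4]/(num_blocks 1) -q1.
exists 0, (slot_start q r r); split; [lia|rewrite /slot_start minnn; nia|].
rewrite (class0 q); last by rewrite /num_blocks (negbTE q_neq1) mulnA.
rewrite -(@card_ord_mod (num_blocks q * d) q.+1 (q * d) r); last by nia.
- by apply: eq_card => x; rewrite !inE block_colouring_eq_slot_r.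
- by rewrite /num_blocks (negbTE q_neq1) -mulnA mulnCA.
Qed.

Lemma num_blocks_long : k + d <= num_blocks q * d.
Proof.
rewrite /num_blocks; have [->|q_neq1] := eqVneq q 1; first lia.
have qq_ge2 : 2 <= q * q by apply: (@leq_mul 2 1); lia.
have : 2 * d <= q * q * d by rewrite leq_mul2r qq_ge2 orbT.
rewrite mulnSr mulnDl; lia.
Qed.

Lemma num_blocks_small : num_blocks q <= k ^ 4.
Proof.
have k_ge2 : 2 <= k by nia.
apply: (@leq_trans (k ^ 2)); last by apply: leq_pexp2l; lia.
have q_lt_k : q < k by nia.
rewrite /num_blocks -mulnn; case: (q == 1); first nia.
by apply: leq_mul; lia.
Qed.

End BlockColouring.

Section CycleColouring.

Variables (k l m : nat) (col : nat -> nat).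
Hypotheses (l_lt_k : l < k) (col_lt : forall x, col x < k).
Hypothesis col_mod : forall x, col (x %% (m * (k - l))) = col x.
Hypothesis col_window :
  forall j c, c < k -> exists2 t, t < k & col (j * (k - l) + t) = c.

Definition cycle_colouring (x : 'I_(m * (k - l))) : 'I_k := Ordinal (col_lt x).

Lemma cycle_colouring_rainbow : rainbow (cyc_edges k l m) cycle_colouring.
Proof.
move=> f /imsetP[j _ ->]; apply/setP => c; rewrite in_setT.
have [t t_lt_k tE] := col_window j (ltn_ord c).
have n_gt0 : 0 < m * (k - l).
  by rewrite muln_gt0 subn_gt0 l_lt_k (leq_ltn_trans (leq0n j) (ltn_ord j)).
apply/imsetP; exists (Ordinal (ltn_pmod (j * (k - l) + t) n_gt0)).
  by rewrite inE; apply/existsP; exists (Ordinal t_lt_k).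
by apply: val_inj; rewrite /= col_mod.
Qed.

Lemma colour_class_cycle_colouring c :
  colour_class cycle_colouring c = #|[set x : 'I_(m * (k - l)) | col x == c]|.
Proof. by apply: eq_card => x; rewrite !inE. Qed.

End CycleColouring.

Theorem lemma5p1 (k l : nat) (V : finType) (E : {set {set V}}) :
  1 <= l -> l <= k - 1 -> ~~ ((k - l) %| k) ->
  kgraph k E -> l_connected l E ->
  exists m : nat,
    [/\ is_lcycle k l m,
        #|cyc_edges k l m| <= k ^ 4,
        kpartite k (cyc_edges k l m)
      & lattice_complete (cyc_edges k l m) E].
Proof.
move=> l_gt0 l_le ndvd kgraphE connE.
have l_lt_k : l < k by lia.
set d := k - l in ndvd *; have d_gt0 : 0 < d by rewrite subn_gt0.
have kE : k = k %/ d * d + k %% d := divn_eq k d.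
set q := k %/ d in kE; set r := k %% d in kE ndvd.
have r_gt0 : 0 < r by rewrite lt0n.
have r_lt_d : r < d by rewrite ltn_pmod.
have q_gt0 : 0 < q by rewrite divn_gt0 // leq_subr.
have col_lt x : block_colouring d q r x < k by rewrite kE block_colouring_lt.
have window j c : c < k -> exists2 t, t < k & block_colouring d q r (j * d + t) = c.
  by rewrite kE; apply: block_colouring_window.
have rainbow_phi := cycle_colouring_rainbow l_lt_k col_lt (block_colouring_mod d q r) window.
have long : k + d <= num_blocks q * d by rewrite kE; apply: num_blocks_long.
exists (num_blocks q); split.
- exact: cyc_is_lcycle.
- by apply: leq_trans (leq_imset_card _ _) _; rewrite card_ord kE; apply: num_blocks_small.
- by apply: rainbow_kpartite rainbow_phi; apply: cyc_edges_kgraph; lia.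
have [a [b [a_lt b_lt class_ab]]] := block_colouring_classes r_gt0 r_lt_d q_gt0.
rewrite -kE in a_lt b_lt.
apply: (@rainbow_lattice_complete _ _ _ _ _ _ (Ordinal a_lt) (Ordinal b_lt)
          rainbow_phi kgraphE _ l l_gt0 connE).
by rewrite !colour_class_cycle_colouring.
Qed.
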